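(* For every basic patterns (graphs) $P_1$ and $P_2$, the basic pattern $P_1\cup P_2$ is equivalent to the pattern $P_1\ \mathrm{JOIN}\ P_2$ and to the pattern $P_2\ \mathrm{JOIN}\ P_1$; that is, for every graph $G$ the three patterns have the same value over $G$.
   Context: Labels $\mathcal{L}$ are the disjoint union of constants $\mathcal{C}$ and variables $\mathcal{V}$. A graph $X$ consists of a set of nodes $X_N\subseteq\mathcal{L}$ and a set of triples $X_T\subseteq\mathcal{L}^3$ whose subjects and objects are nodes (isolated nodes allowed); its labels $\mathcal{L}(X)$ are its nodes and predicates, $\mathcal{V}(X)=\mathcal{V}\cap\mathcal{L}(X)$; the union $X_1\cup X_2$ is componentwise union of nodes and triples. A match $m:X\to G$ is a function $\mathcal{L}(X)\to\mathcal{L}(G)$ mapping nodes to nodes, triples (componentwise) to triples, and fixing every constant; a set of matches all from $X$ to $G$ is written $\underline{m}:X\Rightarrow G$ (a set of matches is determined by its domain graph, codomain graph and underlying functions). Two matches $m_1:X_1\to G_1$, $m_2:X_2\to G_2$ are compatible if they agree on $\mathcal{V}(X_1)\cap\mathcal{V}(X_2)$, and then $m_1\bowtie m_2:X_1\cup X_2\to G_1\cup G_2$ is the match agreeing with $m_1$ on $\mathcal{L}(X_1)$ and $m_2$ on $\mathcal{L}(X_2)$. For $\underline{m}:X\Rightarrow G$ and $\underline{p}:Y\Rightarrow H$, $\mathrm{Join}(\underline{m},\underline{p})=\{m\bowtie p\mid m\in\underline{m},p\in\underline{p},m\text{ and }p\text{ compatible}\}:X\cup Y\Rightarrow G\cup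 H$. The value of a basic pattern (graph) $P$ over a graph $G$ is the set of all matches from $P$ to $G$, as a set of matches $P\Rightarrow G$. The value of $P_1\ \mathrm{JOIN}\ P_2$ over $G$ is $\mathrm{Join}(\underline{m}_1,\underline{m}_2)$ where $\underline{m}_1:X_1\Rightarrow G_1$ is the value of $P_1$ over $G$ and $\underline{m}_2$ is the value of $P_2$ over $G_1$. Two patterns are equivalent if they have the same value (same set of matches with same domain and codomain graphs) over every graph $G$. *)

Set Implicit Arguments.

Section Defs.
Variables (C V : Type).

(* Labels: disjoint union of constants (inl) and variables (inr). *)
Definition label := (C + V)%type.

Record graph := Graph {
  nodes : label -> Prop;
  triples : label -> label -> label -> Prop }.

Definition wf_graph (X : graph) : Prop :=
  forall s p o, triples X s p o -> nodes X s /\ nodes X o.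

Definition labels (X : graph) (l : label) : Prop :=
  nodes X l \/ exists s o, triples X s l o.

Definition vars (X : graph) (v : V) : Prop := labels X (inr v).

Definition gunion (X Y : graph) : graph :=
  Graph (fun n => nodes X n \/ nodes Y n)
        (fun s p o => triples X s p o \/ triples Y s p o).

Definition graph_eq (X Y : graph) : Prop :=
  (forall n, nodes X n <-> nodes Y n) /\
  (forall s p o, triples X s p o <-> triples Y s p o).

(* A match X -> G, represented by a function on labels whose restriction to
   L(X) is the match. *)
Definition is_match (X G : graph) (m : label -> label) : Prop :=
  (forall l, labels X l -> labels G (m l)) /\
  (forall n, nodes X n -> nodes G (m n)) /\
  (forall s p o, triples X s p o -> triples G (m s) (m p) (m o)) /\
  (forall c, labels X (inl c) -> m (inl c) = inl c).

Definition agree_on (A : label -> Prop) (f g : label -> label) : Prop :=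
  forall l, A l -> f l = g l.

(* A set of matches X => G : domain graph, codomain graph, and the set of
   underlying functions (significant only on L(X)). *)
Record mset := MSet {
  mdom : graph;
  mcod : graph;
  mfun : (label -> label) -> Prop }.

Definition compatible (X1 X2 : graph) (m1 m2 : label -> label) : Prop :=
  forall v, vars X1 v -> vars X2 v -> m1 (inr v) = m2 (inr v).

(* Join(m1, m2) : X1 u X2 => G1 u G2, whose elements are the m1 ⋈ m2
   (a function agreeing with m1 on L(X1) and with m2 on L(X2)). *)
Definition Join (S1 S2 : mset) : mset :=
  MSet (gunion (mdom S1) (mdom S2)) (gunion (mcod S1) (mcod S2))
    (fun f => exists m1 m2, mfun S1 m1 /\ mfun S2 m2 /\
       compatible (mdom S1) (mdom S2) m1 m2 /\
       agree_on (labels (mdom S1)) f m1 /\ agree_on (labels (mdom S2)) f m2).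

Definition mset_eq (S T : mset) : Prop :=
  graph_eq (mdom S) (mdom T) /\ graph_eq (mcod S) (mcod T) /\
  (forall f, mfun S f -> exists g, mfun T g /\ agree_on (labels (mdom S)) f g) /\
  (forall g, mfun T g -> exists f, mfun S f /\ agree_on (labels (mdom T)) g f).

Inductive pattern :=
| Basic (X : graph)
| JOIN (P1 P2 : pattern).

Fixpoint eval (P : pattern) (G : graph) : mset :=
  match P with
  | Basic X => MSet X G (is_match X G)
  | JOIN P1 P2 =>
      let m1 := eval P1 G in Join m1 (eval P2 (mcod m1))
  end.

Definition equivalent (P Q : pattern) : Prop :=
  forall G, wf_graph G -> mset_eq (eval P G) (eval Q G).

End Defs.


Set Implicit Arguments.

(* A function matches P1 ∪ P2 into G iff it matches both P1 and P2, and since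
   subjects and objects of triples are nodes, whether it matches P_i depends
   only on its values on L(P_i).  So every m1 ⋈ m2 is a match of P1 ∪ P2, and
   every match f of P1 ∪ P2 arises as f ⋈ f; the codomain of the join is
   G ∪ G, which is G again. *)

Section Matches.
Variables (C V : Type).
Implicit Types (X Y Q G : graph C V) (f m : label C V -> label C V).

Lemma labels_subgraph X Y l :
  (forall n, nodes X n -> nodes Y n) ->
  (forall s p o, triples X s p o -> triples Y s p o) ->
  labels X l -> labels Y l.
Proof.
  intros HN HT [Hn | (s & o & Ht)].
  - left; auto.
  - right; eauto.
Qed.

Lemma is_match_subgraph X Y G f :
  (forall n, nodes X n -> nodes Y n) ->
  (forall s p o, triples X s p o -> triples Y s p o) ->
  is_match Y G f -> is_match X G f.
Proof.
  intros HXY TXY (HL & HN & HT & HC).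
  split; [| split; [| split]]; intros; auto.
  - apply HL; eapply labels_subgraph; eauto.
  - apply HC; eapply labels_subgraph; eauto.
Qed.

Lemma labels_gunion X Y l : labels (gunion X Y) l <-> labels X l \/ labels Y l.
Proof.
  unfold labels; simpl; split.
  - intros [[Hn | Hn] | (s & o & [Ht | Ht])]; eauto 6.
  - intros [[Hn | (s & o & Ht)] | [Hn | (s & o & Ht)]]; eauto 6.
Qed.

Lemma graph_eq_gunionC X Y : graph_eq (gunion X Y) (gunion Y X).
Proof. split; simpl; tauto. Qed.

Lemma is_match_graph_eq X Y G f : graph_eq X Y -> is_match X G f <-> is_match Y G f.
Proof.
  intros [HN HT]; split; apply is_match_subgraph; intros; apply HN || apply HT; assumption.
Qed.

Lemma is_match_gunion X Y G f :
  is_match (gunion X Y) G f <-> is_match X G f /\ is_match Y G f.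
Proof.
  split.
  - intros Hf; split; revert Hf; apply is_match_subgraph; simpl; tauto.
  - intros [(HL1 & HN1 & HT1 & HC1) (HL2 & HN2 & HT2 & HC2)].
    split; [| split; [| split]].
    + intros l Hl; apply labels_gunion in Hl as [Hl | Hl]; auto.
    + intros n [Hn | Hn]; auto.
    + intros s p o [Ht | Ht]; auto.
    + intros c Hc; apply labels_gunion in Hc as [Hc | Hc]; auto.
Qed.

Lemma is_match_agree_on X G m f :
  wf_graph X -> agree_on (labels X) f m -> is_match X G m -> is_match X G f.
Proof.
  intros WX Efm (HL & HN & HT & HC).
  assert (Hnode : forall n, nodes X n -> labels X n) by (intros; left; assumption).
  split; [| split; [| split]].
  - intros l Hl; rewrite (Efm l Hl); auto.
  - intros n Hn; rewrite (Efm n (Hnode n Hn)); auto.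
  - intros s p o Ht.
    destruct (WX s p o Ht) as [Hs Ho].
    assert (Hp : labels X p) by (right; eauto).
    rewrite (Efm s (Hnode s Hs)), (Efm p Hp), (Efm o (Hnode o Ho)); auto.
  - intros c Hc; rewrite (Efm _ Hc); auto.
Qed.

Lemma mfun_Join_basic X Y G f :
  wf_graph X -> wf_graph Y ->
  mfun (eval (JOIN (Basic X) (Basic Y)) G) f <-> is_match (gunion X Y) G f.
Proof.
  intros WX WY; simpl; split.
  - intros (m1 & m2 & M1 & M2 & _ & E1 & E2).
    apply is_match_gunion; split; eapply is_match_agree_on; eassumption.
  - intros Hf; apply is_match_gunion in Hf as [HX HY].
    exists f, f; split; [exact HX | split; [exact HY | split]].
    + intros v _ _; reflexivity.
    + split; intros l _; reflexivity.
Qed.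

Lemma basic_JOIN_equivalent X Y Q :
  wf_graph X -> wf_graph Y -> graph_eq Q (gunion X Y) ->
  equivalent (Basic Q) (JOIN (Basic X) (Basic Y)).
Proof.
  intros WX WY EQ G _.
  split; [exact EQ | split; [split; simpl; tauto | split]].
  - intros f Hf; exists f; split; [| intros l _; reflexivity].
    apply mfun_Join_basic, (is_match_graph_eq G f EQ); assumption.
  - intros g Hg; exists g; split; [| intros l _; reflexivity].
    apply (is_match_graph_eq G g EQ), (mfun_Join_basic G g WX WY); exact Hg.
Qed.

End Matches.

Theorem proposition3 (C V : Type) (P1 P2 : graph C V) :
  wf_graph P1 -> wf_graph P2 ->
  equivalent (Basic (gunion P1 P2)) (JOIN (Basic P1) (Basic P2)) /\
  equivalent (Basic (gunion P1 P2)) (JOIN (Basic P2) (Basic P1)).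
Proof.
  intros W1 W2; split; apply basic_JOIN_equivalent; auto.
  - split; intros; tauto.
  - apply graph_eq_gunionC.
Qed.
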